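(* In the fixed-design setting of the context, let $P$ be the orthogonal projection of $\mathcal H$ onto $\mathcal H_m$. Then for every $\lambda>0$, \[ \mathbb E\big[\widehat{\mathcal E}_\lambda(Pf_{\lambda,\gamma})\big]\le \frac{2}{n\lambda}\operatorname{tr}\!\big(K-\widetilde K\big)\,\mathbb E\big[\widehat{\mathcal E}_\lambda(f_{\lambda,\gamma})\big]+2\,\mathbb E\big[\widehat{\mathcal E}_\lambda(f_{\lambda,\gamma})\big]. \]
   Context: Let $\mathcal X$ be a set and $k_\gamma$ a positive definite kernel on $\mathcal X$ with RKHS $\mathcal H$. Fixed points $x_1,\dots,x_n\in\mathcal X$, $f^*:\mathcal X\to\mathbb R$, labels $y_i=f^*(x_i)+\epsilon_i$ with $\epsilon_i$ i.i.d. real, $\mathbb E[\epsilon_i]=0$, $\mathbb E[\epsilon_i^2]=\sigma^2$; $Y=(y_i)_i$, $f(X)=(f(x_i))_i$. Fixed inducing points $z_1,\dots,z_m$. $K_{ij}=k_\gamma(x_i,x_j)$, $(K_{nm})_{ij}=k_\gamma(x_i,z_j)$, $(K_{mm})_{ij}=k_\gamma(z_i,z_j)$, $\widetilde K=K_{nm}K_{mm}^\dagger K_{nm}^\top$ ($\dagger$ = Moore–Penrose pseudo-inverse). $\widehat{\mathcal E}_\lambda(f)=\frac1n\|f(X)-Y\|^2+\lambda\|f\|_{\mathcal H}^2$. $\mathcal H_m=\operatorname{span}\{k_\gamma(z_j,\cdot)\}_{j=1}^m$. The noise-less KRR estimator is $f_{\lambda,\gamma}=\arg\min_{f\in\mathcal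 H}\frac1n\|f(X)-f^*(X)\|^2+\lambda\|f\|_{\mathcal H}^2$ (deterministic). Expectation is over the noise. *)

From HB Require Import structures.
From mathcomp Require Import all_boot all_order all_algebra.
From mathcomp Require Import all_classical all_reals all_analysis.
Set Implicit Arguments. Unset Strict Implicit. Unset Printing Implicit Defensive.
Import Order.TTheory GRing.Theory Num.Theory.
Local Open Scope classical_set_scope.
Local Open Scope ring_scope.

Definition is_inner_product (R : realType) (V : lmodType R) (ip : V -> V -> R) :=
  [/\ (forall a u v w, ip (a *: u + v) w = a * ip u w + ip v w),
      (forall u v, ip u v = ip v u),
      (forall v, 0 <= ip v v) &
      (forall v, ip v v = 0 -> v = 0)].

Definition hnorm2 (R : realType) (V : lmodType R) (ip : V -> V -> R) (f : V) : R :=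
  ip f f.

(* A reproducing-kernel structure for the kernel k on X: V is a space of
   functions on X (f is identified with x |-> ip f (kx x), and this
   identification is injective) whose reproducing kernel is k, i.e.
   kx x = k(x, .) and k x y = <k(x,.), k(y,.)>. *)
Definition is_rkhs (X : Type) (R : realType) (V : lmodType R) (ip : V -> V -> R)
  (k : X -> X -> R) (kx : X -> V) :=
  [/\ is_inner_product ip,
      (forall x y, ip (kx x) (kx y) = k x y) &
      (forall f, (forall x, ip f (kx x) = 0) -> f = 0)].

Definition feval (X : Type) (R : realType) (V : lmodType R) (ip : V -> V -> R)
  (kx : X -> V) (f : V) (x : X) : R := ip f (kx x).

Definition Hm (X : Type) (R : realType) (V : lmodType R) (kx : X -> V) (m : nat)
  (z : 'I_m -> X) : set V :=
  [set v | exists c : 'I_m -> R, v = \sum_(j < m) c j *: kx (z j)].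

Definition is_orth_proj (R : realType) (V : lmodType R) (ip : V -> V -> R)
  (S : set V) (Pr : V -> V) :=
  forall f, S (Pr f) /\ (forall g, S g -> ip (f - Pr f) g = 0).

Definition gram (X : Type) (R : realType) (p q : nat) (k : X -> X -> R)
  (a : 'I_p -> X) (b : 'I_q -> X) : 'M[R]_(p, q) :=
  \matrix_(i < p, j < q) k (a i) (b j).

(* B is the Moore--Penrose pseudo-inverse of A (Penrose conditions; over the
   reals conjugate transpose is transpose). *)
Definition is_MP_pinv (R : realType) (p q : nat) (A : 'M[R]_(p, q))
  (B : 'M[R]_(q, p)) :=
  [/\ A *m B *m A = A, B *m A *m B = B,
      (A *m B)^T = A *m B & (B *m A)^T = B *m A].

Definition mutually_independent d (T : measurableType d) (R : realType)
  (P : probability T R) (n : nat) (eps : 'I_n -> {RV P >-> R}) :=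
  forall B : 'I_n -> set R, (forall i, measurable (B i)) ->
    P (\bigcap_i (eps i @^-1` B i)) = (\prod_(i < n) P (eps i @^-1` B i))%E.

Definition identically_distributed d (T : measurableType d) (R : realType)
  (P : probability T R) (n : nat) (eps : 'I_n -> {RV P >-> R}) :=
  forall i j (B : set R), measurable B -> P (eps i @^-1` B) = P (eps j @^-1` B).

Definition emp_risk (X : Type) (R : realType) (V : lmodType R) (ip : V -> V -> R)
  (kx : X -> V) (n : nat) (x : 'I_n -> X) (Y : 'I_n -> R) (lam : R) (f : V) : R :=
  n%:R^-1 * (\sum_(i < n) (feval ip kx f (x i) - Y i) ^+ 2) + lam * hnorm2 ip f.

Definition is_noiseless_krr (X : Type) (R : realType) (V : lmodType R)
  (ip : V -> V -> R) (kx : X -> V) (n : nat) (x : 'I_n -> X) (fstar : X -> R)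
  (lam : R) (f : V) :=
  forall g, emp_risk ip kx x (fun i => fstar (x i)) lam f
            <= emp_risk ip kx x (fun i => fstar (x i)) lam g.

From HB Require Import structures.
From mathcomp Require Import all_boot all_order all_algebra.
From mathcomp Require Import all_classical all_reals all_analysis.
From mathcomp Require Import ring lra.
Import Order.TTheory GRing.Theory Num.Theory.
Local Open Scope classical_set_scope.
Local Open Scope ring_scope.
Set Implicit Arguments. Unset Strict Implicit.

(* The inequality holds for every realization of the noise, so only
   monotonicity and homogeneity of the expectation are needed.  Pointwise: put
   r_x := k(x,.) - P k(x,.).  Orthogonality and the reproducing property give
   Pf(x) - f(x) = -<f - Pf, r_x>, hence by Cauchy-Schwarz
   (Pf(x) - f(x))^2 <= ||f||^2 ||r_x||^2, and ||r_x||^2 is the x-th diagonal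
   entry of K - Ktilde (Nystrom).  Splitting Pf(x) - y_i = (Pf(x) - f(x)) +
   (f(x) - y_i) with (a + b)^2 <= 2a^2 + 2b^2 and using ||Pf|| <= ||f||
   bounds the risk of Pf by the right-hand side. *)

Section InnerProduct.
Variables (R : realType) (V : lmodType R) (ip : V -> V -> R).
Hypothesis hip : is_inner_product ip.

Lemma ipC u v : ip u v = ip v u.
Proof. by case: hip. Qed.

Lemma ipZDl a u v w : ip (a *: u + v) w = a * ip u w + ip v w.
Proof. by case: hip. Qed.

Lemma ip_ge0 v : 0 <= ip v v.
Proof. by case: hip. Qed.

Lemma ip_eq0 v : ip v v = 0 -> v = 0.
Proof. by case: hip => _ _ _; apply. Qed.

Lemma ip0l w : ip 0 w = 0.
Proof. have := ipZDl 1 0 0 w; rewrite scaler0 addr0 mul1r => h; lra. Qed.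

Lemma ip0r w : ip w 0 = 0.
Proof. by rewrite ipC ip0l. Qed.

Lemma ipDl u v w : ip (u + v) w = ip u w + ip v w.
Proof. by rewrite -[u]scale1r ipZDl mul1r scale1r. Qed.

Lemma ipDr u v w : ip w (u + v) = ip w u + ip w v.
Proof. by rewrite ipC ipDl !(ipC w). Qed.

Lemma ipZl a u w : ip (a *: u) w = a * ip u w.
Proof. by rewrite -[a *: u]addr0 ipZDl ip0l addr0. Qed.

Lemma ipZr a u w : ip w (a *: u) = a * ip w u.
Proof. by rewrite ipC ipZl ipC. Qed.

Lemma ipBl u v w : ip (u - v) w = ip u w - ip v w.
Proof. by rewrite ipDl -scaleN1r ipZl mulN1r. Qed.

Lemma ipBr u v w : ip w (u - v) = ip w u - ip w v.
Proof. by rewrite ipC ipBl !(ipC w). Qed.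

Lemma ip_suml I (r : seq I) (F : I -> V) w :
  ip (\sum_(j <- r) F j) w = \sum_(j <- r) ip (F j) w.
Proof.
elim/big_rec2: _ => [|j y1 y2 _ <-]; first by rewrite ip0l.
by rewrite ipDl.
Qed.

Lemma ip_CauchySchwarz u v : ip u v ^+ 2 <= ip u u * ip v v.
Proof.
have [v0|vn0] := eqVneq (ip v v) 0.
  by rewrite (ip_eq0 v0) !ip0r; lra.
have vp : 0 < ip v v by rewrite lt_def vn0 ip_ge0.
pose t := ip u v / ip v v.
have := ip_ge0 (u - t *: v).
rewrite ipBl !ipBr !ipZl !ipZr [ip v u]ipC.
have -> : t * ip u v - t * (t * ip v v) = 0 by rewrite /t; field.
rewrite subr0 subr_ge0 /t -(ler_pM2r vp) mulrAC divfK //.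
Qed.

Lemma ip_Pythagoras u v : ip u v = 0 -> ip (u + v) (u + v) = ip u u + ip v v.
Proof. by move=> o; rewrite ipDl !ipDr o (ipC v) o addr0 add0r. Qed.

Section OrthogonalProjection.
Variables (S : set V) (Pr : V -> V).
Hypothesis hPr : is_orth_proj ip S Pr.

Lemma orth_proj_Pythagoras f :
  ip f f = ip (Pr f) (Pr f) + ip (f - Pr f) (f - Pr f).
Proof.
have o : ip (f - Pr f) (Pr f) = 0 by apply: (hPr f).2; exact: (hPr f).1.
by rewrite -{1 2}(subrK (Pr f) f) (ip_Pythagoras o) addrC.
Qed.

Lemma orth_proj_norm_le f : ip (Pr f) (Pr f) <= ip f f.
Proof. by rewrite (orth_proj_Pythagoras f) lerDl ip_ge0. Qed.

Lemma orth_proj_ipB f g :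
  ip (Pr f) g - ip f g = - ip (f - Pr f) (g - Pr g).
Proof.
have o : ip f (Pr g) - ip (Pr f) (Pr g) = 0.
  by rewrite -ipBl; apply: (hPr f).2; exact: (hPr g).1.
by rewrite ipBl !ipBr; move: o; lra.
Qed.

Lemma orth_proj_ipB_sqr_le f g :
  (ip (Pr f) g - ip f g) ^+ 2 <= ip f f * ip (g - Pr g) (g - Pr g).
Proof.
rewrite orth_proj_ipB sqrrN.
apply: le_trans (ip_CauchySchwarz _ _) _.
by rewrite ler_wpM2r ?ip_ge0 // (orth_proj_Pythagoras f) lerDr ip_ge0.
Qed.

End OrthogonalProjection.
End InnerProduct.

Section Nystrom.
Variables (R : realType) (X : Type) (k : X -> X -> R)
  (V : lmodType R) (ip : V -> V -> R) (kx : X -> V).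
Hypothesis hH : is_rkhs ip k kx.
Variables (m : nat) (z : 'I_m -> X) (Pr : V -> V).
Hypothesis hPr : is_orth_proj ip (Hm kx z) Pr.

Let hip : is_inner_product ip. Proof. by case: hH. Qed.
Let ip_kx a b : ip (kx a) (kx b) = k a b. Proof. by case: hH. Qed.

Lemma rkhs_kernel_sym a b : k a b = k b a.
Proof. by rewrite -!ip_kx ipC. Qed.

Lemma Hm_kx l : Hm kx z (kx (z l)).
Proof.
exists (fun j => (j == l)%:R).
rewrite (bigD1 l) //= eqxx scale1r big1 ?addr0 // => j /negbTE ->.
by rewrite scale0r.
Qed.

Lemma gram_tr : (gram k z z)^T = gram k z z.
Proof. by apply/matrixP => i j; rewrite !mxE rkhs_kernel_sym. Qed.

(* The coefficients [c] of [Pr (kx y)] solve [c K_mm = b], and the Penrose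
   identity [K_mm D K_mm = K_mm] turns [b D b^T] into [c K_mm c^T = c b^T]. *)
Lemma Nystrom_residual (D : 'M[R]_m) (hD : is_MP_pinv (gram k z z) D) y :
  let b := \row_l k y (z l) in
  k y y - (b *m D *m b^T) 0 0 = ip (kx y - Pr (kx y)) (kx y - Pr (kx y)).
Proof.
move=> b; have [[c hc] ho] := hPr (kx y).
pose cv : 'rV[R]_m := \row_j c j.
have hb : b = cv *m gram k z z.
  apply/matrixP => i l; rewrite !mxE.
  have /eqP := ho _ (Hm_kx l); rewrite ipBl // ip_kx subr_eq0 => /eqP ->.
  rewrite hc ip_suml //; apply: eq_bigr => j _.
  by rewrite ipZl // ip_kx !mxE.
have bDb : (b *m D *m b^T) 0 0 = \sum_l k y (z l) * c l.
  case: hD => KDK _ _ _.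
  rewrite {2}hb trmx_mul gram_tr !mulmxA {1}hb.
  rewrite -(mulmxA cv (gram k z z) D) -(mulmxA cv _ (gram k z z)) KDK -hb.
  by rewrite !mxE; apply: eq_bigr => l _; rewrite !mxE.
have o : ip (kx y - Pr (kx y)) (Pr (kx y)) = 0 by apply: ho; exists c.
rewrite bDb ipBr // o subr0 ipBl // ip_kx hc ip_suml //.
congr (_ - _); apply: eq_bigr => l _.
by rewrite ipZl // ip_kx rkhs_kernel_sym mulrC.
Qed.

Lemma tr_Nystrom_residual (D : 'M[R]_m) (hD : is_MP_pinv (gram k z z) D)
    n (x : 'I_n -> X) :
  \tr (gram k x x - gram k x z *m D *m (gram k x z)^T) =
  \sum_(i < n) ip (kx (x i) - Pr (kx (x i))) (kx (x i) - Pr (kx (x i))).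
Proof.
apply: eq_bigr => i _; rewrite -(Nystrom_residual hD (x i)) !mxE.
congr (_ - _); apply: eq_bigr => l _; rewrite !mxE; congr (_ * _).
by apply: eq_bigr => j _; rewrite !mxE.
Qed.

End Nystrom.

Section EmpiricalRisk.
Variables (R : realType) (X : Type) (V : lmodType R) (ip : V -> V -> R).
Hypothesis hip : is_inner_product ip.
Variables (kx : X -> V) (n : nat) (x : 'I_n -> X).

Lemma emp_risk_ge0 Y lam f : 0 <= lam -> 0 <= emp_risk ip kx x Y lam f.
Proof.
move=> lam0; apply: addr_ge0; last by rewrite mulr_ge0 ?ip_ge0.
by rewrite mulr_ge0 ?invr_ge0 // sumr_ge0 // => i _; exact: sqr_ge0.
Qed.

Lemma measurable_emp_risk (d : measure_display) (T : measurableType d)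
    (Y : T -> 'I_n -> R) lam f :
  (forall i, measurable_fun setT (Y ^~ i)) ->
  measurable_fun setT (fun w => emp_risk ip kx x (Y w) lam f).
Proof.
move=> mY; apply: measurable_realfun.measurable_funD => //.
apply: measurable_realfun.measurable_funM => //.
apply: measurable_sum => i; apply: measurable_realfun.measurable_funX.
exact: measurable_realfun.measurable_funB.
Qed.

Variables (S : set V) (Pr : V -> V).
Hypothesis hPr : is_orth_proj ip S Pr.
Variables (Y : 'I_n -> R) (lam : R) (f : V).
Hypotheses (hn : (0 < n)%N) (hlam : 0 < lam).

Let res i := ip (kx (x i) - Pr (kx (x i))) (kx (x i) - Pr (kx (x i))).

Lemma sum_sqr_err_orth_proj_le :
  \sum_(i < n) (feval ip kx (Pr f) (x i) - Y i) ^+ 2 <=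
  2 * (ip f f * \sum_(i < n) res i)
  + 2 * \sum_(i < n) (feval ip kx f (x i) - Y i) ^+ 2.
Proof.
rewrite mulr_sumr !mulr_sumr -big_split /=; apply: ler_sum => i _.
have := orth_proj_ipB_sqr_le hip hPr f (kx (x i)); rewrite -/(res i).
set a := ip (Pr f) _ - _; set b := feval ip kx f (x i) - Y i => hab.
have -> : feval ip kx (Pr f) (x i) - Y i = a + b by rewrite /a /b /feval; ring.
have := sqr_ge0 (a - b); rewrite !expr2 in hab * => ?; nra.
Qed.

Lemma emp_risk_orth_proj_le :
  emp_risk ip kx x Y lam (Pr f) <=
  (2 / (n%:R * lam) * \sum_(i < n) res i + 2) * emp_risk ip kx x Y lam f.
Proof.
have res0 : 0 <= \sum_(i < n) res i by apply: sumr_ge0 => i _; exact: ip_ge0.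
have PFf := orth_proj_norm_le hip hPr f; have ff0 := ip_ge0 hip f.
have err := sum_sqr_err_orth_proj_le.
move: res0 err; rewrite /emp_risk /hnorm2.
set Sr := \sum_(i < n) res i.
set A := \sum_(i < n) _; set B := \sum_(i < n) _ => res0 hA.
have B0 : 0 <= B by apply: sumr_ge0 => i _; exact: sqr_ge0.
have ni0 : 0 < n%:R^-1 :> R by rewrite invr_gt0 ltr0n.
have -> : 2 / (n%:R * lam) * Sr = 2 * n%:R^-1 * Sr / lam.
  by rewrite invfM mulrA mulrAC.
set ni := n%:R^-1.
have CB0 : 0 <= 2 * ni * Sr / lam * (ni * B).
  by rewrite !mulr_ge0 ?invr_ge0 // ltW.
have CF : 2 * ni * Sr / lam * (lam * ip f f) = 2 * ni * Sr * ip f f.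
  by field; rewrite gt_eqF.
have hA' : ni * A <= ni * (2 * (ip f f * Sr) + 2 * B) by rewrite ler_pM2l.
have hP : lam * ip (Pr f) (Pr f) <= lam * ip f f by rewrite ler_pM2l.
have lf0 : 0 <= lam * ip f f by rewrite mulr_ge0 // ltW.
rewrite mulrDl mulrDr CF; lra.
Qed.

End EmpiricalRisk.

Lemma expectation_le_scale (d : measure_display) (T : measurableType d)
    (R : realType) (P : probability T R) (A B : T -> R) (c : R) :
  measurable_fun setT A -> measurable_fun setT B -> 0 <= c ->
  (forall w, 0 <= A w) -> (forall w, 0 <= B w) ->
  (forall w, A w <= c * B w) ->
  ('E_P[A] <= c%:E * 'E_P[B])%E.
Proof.
move=> mA mB c0 A0 B0 AB.
have mcB : measurable_fun setT (fun w => c * B w).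
  exact: measurable_realfun.measurable_funM.
apply: (@le_trans _ _ ('E_P[(fun w => c * B w)%R])%E).
  by apply: expectation_le => // [w|]; [exact: mulr_ge0 | exact: aeW].
rewrite unlock; under eq_integral do rewrite EFinM.
rewrite ge0_integralZl_EFin //; first by move=> w _; rewrite lee_fin.
exact/measurable_realfun.measurable_EFinP.
Qed.

Theorem mainTheorem3
  (R : realType) (X : Type) (k : X -> X -> R)
  (V : lmodType R) (ip : V -> V -> R) (kx : X -> V)
  (hH : is_rkhs ip k kx)
  (n m : nat) (hn : (0 < n)%N) (x : 'I_n -> X) (z : 'I_m -> X)
  (fstar : X -> R)
  (d : measure_display) (T : measurableType d) (P : probability T R)
  (eps : 'I_n -> {RV P >-> R}) (sigma2 : R)
  (hind : mutually_independent eps) (hid : identically_distributed eps)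
  (hmean : forall i, ('E_P[eps i] = 0)%E)
  (hvar : forall i, ('E_P[(fun w => (eps i w ^+ 2)%R)] = sigma2%:E)%E)
  (Kmm_dag : 'M[R]_m) (hdag : is_MP_pinv (gram k z z) Kmm_dag)
  (Pr : V -> V) (hPr : is_orth_proj ip (Hm kx z) Pr)
  (lam : R) (hlam : 0 < lam)
  (flam : V) (hflam : is_noiseless_krr ip kx x fstar lam flam) :
  let K := gram k x x in
  let Knm := gram k x z in
  let Ktilde := Knm *m Kmm_dag *m Knm^T in
  let Y := fun w i => fstar (x i) + eps i w in
  ('E_P[(fun w => (emp_risk ip kx x (Y w) lam (Pr flam))%R)]
   <= (2 / (n%:R * lam) * \tr (K - Ktilde))%:E
        * 'E_P[(fun w => (emp_risk ip kx x (Y w) lam flam)%R)]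
      + 2%:E * 'E_P[(fun w => (emp_risk ip kx x (Y w) lam flam)%R)])%E.
Proof.
cbv zeta; set Y := fun w i => fstar (x i) + eps i w.
have hip : is_inner_product ip by case: hH.
have mY i : measurable_fun setT (Y ^~ i).
  exact/measurable_realfun.measurable_funD/measurable_funP.
set C := 2 / (n%:R * lam) * \tr _.
have C0 : 0 <= C.
  rewrite /C (tr_Nystrom_residual hH hPr hdag) mulr_ge0 ?sumr_ge0 // => [|i _].
    by rewrite divr_ge0 // mulr_ge0 // ltW.
  exact: ip_ge0.
rewrite -ge0_muleDl ?lee_fin // -EFinD.
apply: expectation_le_scale; rewrite ?addr_ge0 //.
- exact: measurable_emp_risk.
- exact: measurable_emp_risk.
- by move=> w; apply: emp_risk_ge0 => //; exact: ltW.
- by move=> w; apply: emp_risk_ge0 => //; exact: ltW.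
- move=> w; rewrite /C (tr_Nystrom_residual hH hPr hdag).
  exact: emp_risk_orth_proj_le.
Qed.
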